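(* Let $R>0$, $\mathbf{y}_1,\dots,\mathbf{y}_M\in\mathbb{R}^2$, and $\mathcal{N}'(r):=\sum_{l=1}^Mf(|\mathbf{y}_l|,r)$. If $R\le r_1\le r\le r_2$ with $r_2-r_1\le R/2$, then $$\mathcal{N}'(r_1)+\mathcal{N}'(r_2)\ge\mathcal{N}'(r).$$
   Context: For $d\ge0$, $r\ge0$: $f(d,r)=2r/R^2$ if $r\le R-d$; $f(d,r)=0$ if $r>R+d$ or $r<d-R$; $f(d,r)=\frac{2r}{\pi R^2}\arccos\big(\frac{d^2+r^2-R^2}{2dr}\big)$ otherwise. Thus $\mathcal{N}'$ is the derivative of the particle counting function $\mathcal{N}(r)=\sum_l|B_r(0)\cap B_R(\mathbf{y}_l)|/(\pi R^2)$. *)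

From Stdlib Require Import Reals Lra List.
Open Scope R_scope.

Definition norm2 (p : R * R) : R := sqrt (fst p ^ 2 + snd p ^ 2).

Definition fR (Rad d r : R) : R :=
  if Rle_dec r (Rad - d) then 2 * r / Rad ^ 2
  else if Rlt_dec (Rad + d) r then 0
  else if Rlt_dec r (d - Rad) then 0
  else 2 * r / (PI * Rad ^ 2) * acos ((d ^ 2 + r ^ 2 - Rad ^ 2) / (2 * d * r)).

Definition Nprime (Rad : R) (ys : list (R * R)) (r : R) : R :=
  fold_right (fun p acc => fR Rad (norm2 p) r + acc) 0 ys.

From Stdlib Require Import Reals Lra Psatz List.
From Coquelicot Require Import Coquelicot.
Open Scope R_scope.

(* It suffices to treat one point y at distance d from the origin.  For t >= R the
   circle |x| = t meets B_R(y) in an arc of half-angle θ(t), cos θ(t) = (d² + t² - R²)/(2dt),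
   and f(d, t) = 2 t θ(t) / (π R²); so we need r θ(r) <= r1 θ(r1) + r2 θ(r2).
   The half-angle formula 4 d t sin²(θ(t)/2) = R² - (t - d)² turns this into polynomial
   inequalities for the lens function R² - (t - d)² on the window [r1, r2], once the
   angles are compared through the monotonicity of sin x / x on [0, π/2] and of
   sin² x / x on [0, π/4].  Which comparisons are needed depends on whether θ(r1) and
   θ(r2) lie above or below θ(r), i.e. on the signs of r r1 - (d² - R²) and r r2 - (d² - R²). *)

Lemma id_mul_cos_le_sin u : 0 <= u <= PI -> u * cos u <= sin u.
Proof.
  intros [Hu0 HuPI].
  destruct (Req_dec u 0) as [->|Hu]; [rewrite sin_0; lra|].
  destruct (MVT_cor2 (fun x => sin x - x * cos x) (fun x => x * sin x) 0 u)
    as [c [Hmvt Hc]]; [lra| |].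
  - intros c Hc. apply is_derive_Reals. auto_derive; auto. ring.
  - rewrite sin_0, Rmult_0_l, Rminus_0_r in Hmvt.
    assert (0 <= sin c) by (apply sin_ge_0; lra).
    assert (0 <= c * sin c * (u - 0)) by (apply Rmult_le_pos; [apply Rmult_le_pos|]; lra).
    lra.
Qed.

Lemma sin_ratio_antitone u v : 0 < u -> u <= v -> v <= PI -> u * sin v <= v * sin u.
Proof.
  intros Hu Huv HvPI.
  destruct (Req_dec u v) as [->|Hne]; [lra|].
  destruct (MVT_cor2 (fun x => sin x / x) (fun x => (x * cos x - sin x) / (x * x)) u v)
    as [c [Hmvt Hc]]; [lra| |].
  - intros c Hc. apply is_derive_Reals. auto_derive; [lra|]. field. lra.
  - assert (c * cos c <= sin c) by (apply id_mul_cos_le_sin; lra).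
    assert (Hderiv : (c * cos c - sin c) / (c * c) <= 0).
    { apply Rmult_le_0_r; [lra|]. apply Rlt_le, Rinv_0_lt_compat. nra. }
    assert (Hratio : sin v / v <= sin u / u) by nra.
    apply Rmult_le_compat_r with (r := u * v) in Hratio; [|nra].
    replace (sin v / v * (u * v)) with (u * sin v) in Hratio by (field; lra).
    replace (sin u / u * (u * v)) with (v * sin u) in Hratio by (field; lra).
    lra.
Qed.

Lemma sin_sqr_ratio_monotone u v :
  0 < u -> u <= v -> v <= PI / 4 -> v * sin u ^ 2 <= u * sin v ^ 2.
Proof.
  intros Hu Huv Hv. assert (HPI := PI_RGT_0).
  destruct (Req_dec u v) as [->|Hne]; [lra|].
  destruct (MVT_cor2 (fun x => sin x ^ 2 / x)
              (fun x => (2 * x * sin x * cos x - sin x ^ 2) / (x * x)) u v)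
    as [c [Hmvt Hc]]; [lra| |].
  - intros c Hc. apply is_derive_Reals. auto_derive; [lra|]. field. lra.
  - assert (0 <= sin c) by (apply sin_ge_0; lra).
    assert (sin c <= c) by (left; apply sin_lt_x; lra).
    assert (1 / 2 <= cos c).
    { rewrite <- cos_PI3. destruct (Req_dec c (PI / 3)) as [->|]; [lra|].
      left. apply cos_decreasing_1; lra. }
    assert (Hderiv : 0 <= (2 * c * sin c * cos c - sin c ^ 2) / (c * c)).
    { apply Rmult_le_pos; [|apply Rlt_le, Rinv_0_lt_compat; nra].
      replace (2 * c * sin c * cos c - sin c ^ 2) with (sin c * (2 * c * cos c - sin c))
        by ring.
      apply Rmult_le_pos; nra. }
    assert (Hratio : sin u ^ 2 / u <= sin v ^ 2 / v) by nra.
    apply Rmult_le_compat_r with (r := u * v) in Hratio; [|nra].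
    replace (sin u ^ 2 / u * (u * v)) with (v * sin u ^ 2) in Hratio by (field; lra).
    replace (sin v ^ 2 / v * (u * v)) with (u * sin v ^ 2) in Hratio by (field; lra).
    lra.
Qed.

Lemma sin_half_ratio_antitone t t1 :
  0 < t -> t <= t1 -> t1 <= PI / 2 -> t * sin (t1 / 2) <= t1 * sin (t / 2).
Proof.
  intros. assert (HPI := PI_RGT_0).
  pose proof (sin_ratio_antitone (t / 2) (t1 / 2) ltac:(lra) ltac:(lra) ltac:(lra)). nra.
Qed.

Lemma sin_half_sqr_ratio_monotone t2 t :
  0 <= t2 -> t2 <= t -> t <= PI / 2 -> t * sin (t2 / 2) ^ 2 <= t2 * sin (t / 2) ^ 2.
Proof.
  intros. assert (HPI := PI_RGT_0).
  destruct (Req_dec t2 0) as [->|].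
  - rewrite Rdiv_0_l, sin_0. nra.
  - pose proof (sin_sqr_ratio_monotone (t2 / 2) (t / 2) ltac:(lra) ltac:(lra) ltac:(lra)). nra.
Qed.

Lemma acos_antitone x y : -1 <= x -> x <= y -> y <= 1 -> acos y <= acos x.
Proof.
  intros Hx Hxy Hy. apply Rnot_lt_le. intros Hlt.
  assert (Bx := acos_bound x). assert (By := acos_bound y).
  assert (cos (acos y) < cos (acos x)) by (apply cos_decreasing_1; lra).
  rewrite !cos_acos in * by lra. lra.
Qed.

Lemma angle_weight_le r r1 t t1 s s1 :
  0 < r1 -> 0 <= t -> 0 < s -> 0 <= s1 ->
  t * s1 <= t1 * s -> r * s <= r1 * s1 -> r * t <= r1 * t1.
Proof.
  intros.
  assert (r1 * (t * s1) <= r1 * (t1 * s)) by (apply Rmult_le_compat_l; lra).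
  assert (t * (r * s) <= t * (r1 * s1)) by (apply Rmult_le_compat_l; lra).
  apply Rmult_le_reg_r with s; nra.
Qed.

Lemma angle_weight_le_sum_sqrt r r1 r2 t t1 t2 s s1 s2 :
  0 < r -> 0 < r1 -> 0 < r2 -> 0 < s -> 0 <= s1 -> 0 <= t -> 0 <= t2 ->
  t * s1 <= t1 * s -> t * s2 ^ 2 <= t2 * s ^ 2 ->
  (r * s) ^ 2 <= (r1 * s1) ^ 2 + r * r2 * s2 ^ 2 -> r * t <= r1 * t1 + r2 * t2.
Proof.
  intros Hr Hr1 Hr2 Hs Hs1 Ht Ht2 H1 H2 Hsq.
  assert (0 <= r2 * t2) by nra.
  destruct (Rle_dec (r * s) (r1 * s1)) as [Hle|Hgt].
  { pose proof (angle_weight_le r r1 t t1 s s1). lra. }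
  (* t (r1 s1)^2 <= t (r1 s1) (r s) <= r1 t1 s (r s) bounds the first summand of t * Hsq. *)
  assert (G1 : t * (r1 * s1) * (r1 * s1) <= t * (r1 * s1) * (r * s)).
  { apply Rmult_le_compat_l; [apply Rmult_le_pos; nra | lra]. }
  assert (G2 : t * (r1 * s1) * (r * s) <= r1 * t1 * s * (r * s)).
  { apply Rmult_le_compat_r; [nra|].
    assert (r1 * (t * s1) <= r1 * (t1 * s)) by (apply Rmult_le_compat_l; lra). nra. }
  assert (G3 : r * r2 * (t * s2 ^ 2) <= r * r2 * (t2 * s ^ 2))
    by (apply Rmult_le_compat_l; nra).
  assert (G4 : t * (r * s) ^ 2 <= t * ((r1 * s1) ^ 2 + r * r2 * s2 ^ 2))
    by (apply Rmult_le_compat_l; lra).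
  assert (0 < r * s ^ 2) by (apply Rmult_lt_0_compat; [lra | apply pow_lt; lra]).
  apply Rmult_le_reg_r with (r * s ^ 2); nra.
Qed.

Lemma angle_weight_le_sum r r1 r2 t t1 t2 s s1 s2 :
  0 < s -> 0 <= t -> 0 <= r1 -> 0 <= r2 ->
  t * s1 ^ 2 <= t1 * s ^ 2 -> t * s2 ^ 2 <= t2 * s ^ 2 ->
  r * s ^ 2 <= r1 * s1 ^ 2 + r2 * s2 ^ 2 -> r * t <= r1 * t1 + r2 * t2.
Proof.
  intros Hs Ht Hr1 Hr2 H1 H2 Hsq.
  assert (r1 * (t * s1 ^ 2) <= r1 * (t1 * s ^ 2)) by (apply Rmult_le_compat_l; lra).
  assert (r2 * (t * s2 ^ 2) <= r2 * (t2 * s ^ 2)) by (apply Rmult_le_compat_l; lra).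
  assert (t * (r * s ^ 2) <= t * (r1 * s1 ^ 2 + r2 * s2 ^ 2))
    by (apply Rmult_le_compat_l; lra).
  assert (0 < s ^ 2) by (apply pow_lt; lra).
  apply Rmult_le_reg_r with (s ^ 2); nra.
Qed.

Lemma cap_growth_bound a r1 x t : 0 < a -> a <= r1 -> 0 <= x <= a / 2 -> 0 <= t <= a / 2 ->
  (r1 + t) * ((x + a / 2) ^ 2 - (x + t) ^ 2) <= r1 * (a ^ 2 - x ^ 2).
Proof.
  intros Ha Hr1 Hx Ht.
  assert (0 <= (r1 - a) * (3 / 4 * a ^ 2 - a * x - x ^ 2 + 2 * x * t + t ^ 2))
    by (apply Rmult_le_pos; nra).
  assert (0 <= a * x * (a / 2 - x)) by (apply Rmult_le_pos; nra).
  assert (0 <= (a / 2 - x) * (3 / 4 * a ^ 2 - a * t / 4)) by (apply Rmult_le_pos; nra).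
  assert (0 <= x * a * t) by (apply Rmult_le_pos; nra).
  assert (0 <= (a + 2 * x + t) * t ^ 2) by (apply Rmult_le_pos; nra).
  lra.
Qed.

(* The next two lemmas are in the shifted coordinates x = r1 - d, y = r - d, z = r2 - d,
   in which lens t becomes a^2 minus the square of the coordinate. *)
Lemma shifted_lens_mix a d x y z : 0 < a -> 0 < d -> x <= y -> y <= z -> z - x <= a / 2 ->
  a <= x + d -> x ^ 2 <= a ^ 2 -> y ^ 2 <= a ^ 2 -> z ^ 2 <= a ^ 2 ->
  (y + d) * (a ^ 2 - y ^ 2) <= (x + d) * (a ^ 2 - x ^ 2) + (y + d) * (a ^ 2 - z ^ 2).
Proof.
  intros Ha Hd Hxy Hyz Hwidth Hx Sx Sy Sz.
  assert (0 <= (x + d) * (a ^ 2 - x ^ 2)) by (apply Rmult_le_pos; lra).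
  destruct (Rle_dec (z ^ 2) (y ^ 2)) as [Hzy|Hzy].
  { assert (0 <= (y + d) * (y ^ 2 - z ^ 2)) by (apply Rmult_le_pos; lra). nra. }
  assert (Hz : 0 < z) by nra.
  destruct (Rlt_dec x 0) as [Hxneg|Hxpos].
  { (* all three points lie within a/2 of d *)
    assert (z ^ 2 <= a ^ 2 / 4) by nra.
    assert (x ^ 2 <= a ^ 2 / 4) by nra.
    assert (0 <= (y + d) * (a ^ 2 / 4 - z ^ 2)) by (apply Rmult_le_pos; lra).
    assert (0 <= (y + d) * y ^ 2) by (apply Rmult_le_pos; [lra | apply pow2_ge_0]).
    assert (0 <= (x + d) * (3 / 4 * a ^ 2 - x ^ 2)) by (apply Rmult_le_pos; lra).
    assert (0 <= (3 / 2 * (x + d) - (y + d)) * (a ^ 2 / 4)) by (apply Rmult_le_pos; nra).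
    nra. }
  destruct (Rle_dec x (a / 2)) as [Hxhalf|Hxhalf].
  { pose proof (cap_growth_bound a (x + d) x (y - x) Ha Hx ltac:(lra) ltac:(lra)) as Hcap.
    replace (x + (y - x)) with y in Hcap by ring.
    replace (x + d + (y - x)) with (y + d) in Hcap by ring.
    assert (0 <= (y + d) * ((x + a / 2) ^ 2 - z ^ 2)) by (apply Rmult_le_pos; nra).
    nra. }
  (* for x > a/2 the map t |-> (t + d) (a^2 - t^2) is already decreasing on [x, y] *)
  assert (Hdecr : a ^ 2 - (x ^ 2 + x * y + y ^ 2) - d * (x + y) <= 0).
  { destruct (Rle_dec (a / 4) d).
    - assert (3 / 4 * a ^ 2 <= x ^ 2 + x * y + y ^ 2) by nra.
      assert (a ^ 2 / 4 <= d * (x + y)) by nra. lra.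
    - assert (a ^ 2 < x ^ 2 + x * y + y ^ 2) by nra.
      assert (0 <= d * (x + y)) by nra. lra. }
  assert (0 <= (y - x) * (- (a ^ 2 - (x ^ 2 + x * y + y ^ 2) - d * (x + y))))
    by (apply Rmult_le_pos; lra).
  assert (0 <= (y + d) * (a ^ 2 - z ^ 2)) by (apply Rmult_le_pos; lra).
  nra.
Qed.

Lemma shifted_lens_sum a d x y z : 0 < a -> 0 < d -> x <= y -> y <= z -> z - x <= a / 2 ->
  a <= x + d -> y ^ 2 <= a ^ 2 -> z ^ 2 <= a ^ 2 ->
  x * y + d * (x + y) < - a ^ 2 -> y * z + d * (y + z) > - a ^ 2 ->
  x ^ 2 <= a ^ 2 /\ a ^ 2 - y ^ 2 <= (a ^ 2 - x ^ 2) + (a ^ 2 - z ^ 2).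
Proof.
  intros Ha Hd Hxy Hyz Hwidth Hx Sy Sz Hxy_prod Hyz_prod.
  assert (Hxa : - a <= x).
  { apply Rnot_lt_le. intros Hlt.
    assert (z + d <= d - a / 2) by lra.
    assert (a <= z + d) by lra.
    assert ((y + d) * (z + d) <= (z + d) * (z + d)) by nra.
    assert ((z + d) * (z + d) <= (d - a / 2) * (d - a / 2)) by nra.
    assert (2 * a < d) by lra.
    nra. }
  assert (y <= a) by nra.
  split; [nra|].
  destruct (Rle_dec z 0).
  - assert (z ^ 2 <= y ^ 2) by nra. nra.
  - assert (z ^ 2 <= (x + a / 2) ^ 2) by nra.
    assert (x < 0) by (apply Rnot_le_lt; intro; nra).
    assert (x ^ 2 <= a ^ 2 / 4) by nra.
    assert ((x + a / 2) ^ 2 <= a ^ 2 / 4) by nra.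
    nra.
Qed.

Lemma fR_nonneg a d t : 0 < a -> 0 <= t -> 0 <= fR a d t.
Proof.
  intros Ha Ht. assert (HPI := PI_RGT_0). unfold fR.
  destruct (Rle_dec t (a - d)).
  { apply Rmult_le_pos; [lra|]. apply Rlt_le, Rinv_0_lt_compat, pow_lt; lra. }
  destruct (Rlt_dec (a + d) t); [lra|].
  destruct (Rlt_dec t (d - a)); [lra|].
  apply Rmult_le_pos; [|apply acos_bound].
  apply Rmult_le_pos; [lra|]. apply Rlt_le, Rinv_0_lt_compat.
  apply Rmult_lt_0_compat; [lra | apply pow_lt; lra].
Qed.

Section Arc.

Variables a d : R.
Hypotheses (Ha : 0 < a) (Hd : 0 < d).

(* The circle of radius t about the origin meets the disk of radius a about a point at
   distance d in an arc of half-angle arc_angle t; lens t >= 0 says that they meet. *)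
Definition arc_cos (t : R) : R := (d ^ 2 + t ^ 2 - a ^ 2) / (2 * d * t).

Definition arc_angle (t : R) : R := acos (arc_cos t).

Definition lens (t : R) : R := a ^ 2 - (t - d) ^ 2.

Lemma one_sub_arc_cos t : 0 < t -> 1 - arc_cos t = lens t / (2 * d * t).
Proof. intros. unfold arc_cos, lens. field. lra. Qed.

Lemma arc_cos_bounds t : a <= t -> 0 <= lens t -> 0 <= arc_cos t <= 1.
Proof.
  intros Ht Hl. pose proof (one_sub_arc_cos t ltac:(lra)) as E.
  assert (Hden : 0 < / (2 * d * t)) by (apply Rinv_0_lt_compat; nra).
  split.
  - apply Rmult_le_pos; [nra | lra].
  - assert (0 <= lens t / (2 * d * t)) by (apply Rmult_le_pos; lra). lra.
Qed.

Lemma arc_angle_bounds t : a <= t -> 0 <= lens t -> 0 <= arc_angle t <= PI / 2.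
Proof.
  intros Ht Hl. pose proof (arc_cos_bounds t Ht Hl).
  split; [apply acos_bound|]. rewrite <- acos_0. apply acos_antitone; lra.
Qed.

Lemma sin_half_arc_angle t : a <= t -> 0 <= lens t ->
  4 * d * t * sin (arc_angle t / 2) ^ 2 = lens t.
Proof.
  intros Ht Hl. pose proof (arc_cos_bounds t Ht Hl).
  assert (Hcos : cos (arc_angle t) = arc_cos t) by (apply cos_acos; lra).
  pose proof (cos_2a_sin (arc_angle t / 2)) as Hdouble.
  replace (2 * (arc_angle t / 2)) with (arc_angle t) in Hdouble by field.
  pose proof (one_sub_arc_cos t ltac:(lra)) as E.
  replace (lens t) with (lens t / (2 * d * t) * (2 * d * t)) by (field; nra).
  rewrite <- E, <- Hcos, Hdouble. ring.
Qed.

Lemma arc_angle_le t u : a <= t -> a <= u -> 0 <= lens t -> 0 <= lens u ->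
  0 <= (t - u) * (t * u - (d ^ 2 - a ^ 2)) -> arc_angle t <= arc_angle u.
Proof.
  intros Ht Hu Hlt Hlu Hsign.
  pose proof (arc_cos_bounds t Ht Hlt). pose proof (arc_cos_bounds u Hu Hlu).
  apply acos_antitone; try lra.
  assert (E : arc_cos t - arc_cos u
              = (t - u) * (t * u - (d ^ 2 - a ^ 2)) * / (2 * d * t * u))
    by (unfold arc_cos; field; lra).
  assert (0 <= (t - u) * (t * u - (d ^ 2 - a ^ 2)) * / (2 * d * t * u)).
  { apply Rmult_le_pos; [lra|]. apply Rlt_le, Rinv_0_lt_compat.
    repeat apply Rmult_lt_0_compat; lra. }
  lra.
Qed.

Lemma fR_in_lens t : a <= t -> 0 <= lens t -> fR a d t = 2 / (PI * a ^ 2) * (t * arc_angle t).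
Proof.
  intros Ht Hl. assert (HPI := PI_RGT_0). unfold fR, arc_angle, arc_cos, lens in *.
  destruct (Rle_dec t (a - d)); [lra|].
  destruct (Rlt_dec (a + d) t); [nra|].
  destruct (Rlt_dec t (d - a)); [nra|].
  field. lra.
Qed.

Lemma fR_out_lens t : a <= t -> lens t < 0 -> fR a d t = 0.
Proof.
  intros Ht Hl. unfold fR, lens in *.
  destruct (Rle_dec t (a - d)); [lra|].
  destruct (Rlt_dec (a + d) t); [reflexivity|].
  destruct (Rlt_dec t (d - a)); [reflexivity|].
  nra.
Qed.

Lemma sin_half_arc_angle_nonneg t : a <= t -> 0 <= lens t -> 0 <= sin (arc_angle t / 2).
Proof.
  intros Ht Hl. pose proof (arc_angle_bounds t Ht Hl). assert (HPI := PI_RGT_0).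
  apply sin_ge_0; lra.
Qed.

Lemma lens_inner_dominates r1 r r2 : a <= r1 -> r1 <= r -> r <= r2 -> r2 - r1 <= a / 2 ->
  d + a < r2 -> 0 <= lens r ->
  d ^ 2 - a ^ 2 <= r * r1 /\ 0 <= lens r1 /\ r * lens r <= r1 * lens r1.
Proof.
  unfold lens. intros H1 H2 H3 Hw Hr2 Hl.
  assert (r <= d + a) by nra.
  split; [nra | split; [nra|]].
  (* r lens r - r1 lens r1 = (r - r1) (a^2 - (r1^2 + r1 r + r^2) + 2 d (r1 + r) - d^2) *)
  assert (a ^ 2 - (r1 ^ 2 + r1 * r + r ^ 2) + 2 * d * (r1 + r) - d ^ 2 <= 0) by nra.
  nra.
Qed.

Lemma arc_le_when_outer_outside r1 r r2 :
  a <= r1 -> r1 <= r -> r <= r2 -> r2 - r1 <= a / 2 ->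
  0 <= lens r -> lens r2 < 0 -> 0 < arc_angle r ->
  0 <= lens r1 /\ r * arc_angle r <= r1 * arc_angle r1.
Proof.
  intros H1 H2 H3 Hw Hl Hl2 Hpos.
  assert (Hr2 : d + a < r2).
  { unfold lens in *. assert (- a <= r - d) by nra.
    apply Rnot_le_lt. intros Hle.
    assert (0 <= (a - (r2 - d)) * (a + (r2 - d))) by (apply Rmult_le_pos; lra).
    nra. }
  destruct (lens_inner_dominates r1 r r2 H1 H2 H3 Hw Hr2 Hl) as [Hprod [Hl1 Hdom]].
  split; [exact Hl1|].
  assert (Hangle : arc_angle r <= arc_angle r1) by (apply arc_angle_le; nra).
  pose proof (arc_angle_bounds r1 H1 Hl1).
  pose proof (sin_half_arc_angle r ltac:(lra) Hl) as Er.
  pose proof (sin_half_arc_angle r1 H1 Hl1) as Er1.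
  pose proof (sin_half_arc_angle_nonneg r1 H1 Hl1).
  assert (0 < sin (arc_angle r / 2)) by (apply sin_gt_0; lra).
  apply (angle_weight_le _ _ _ _ (sin (arc_angle r / 2)) (sin (arc_angle r1 / 2)));
    try lra.
  - apply sin_half_ratio_antitone; lra.
  - rewrite <- Er, <- Er1 in Hdom.
    assert (Hsq : (r * sin (arc_angle r / 2)) ^ 2 <= (r1 * sin (arc_angle r1 / 2)) ^ 2).
    { apply Rmult_le_reg_l with (4 * d); [lra|]. nra. }
    apply Rnot_lt_le. intros Hlt.
    assert (0 <= r1 * sin (arc_angle r1 / 2)) by (apply Rmult_le_pos; lra).
    nra.
Qed.

Lemma arc_le_when_inner_wider r1 r r2 :
  a <= r1 -> r1 <= r -> r <= r2 -> r2 - r1 <= a / 2 ->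
  0 <= lens r -> 0 <= lens r2 -> 0 < arc_angle r ->
  d ^ 2 - a ^ 2 <= r * r1 -> d ^ 2 - a ^ 2 < r * r2 ->
  0 <= lens r1 /\ r * arc_angle r <= r1 * arc_angle r1 + r2 * arc_angle r2.
Proof.
  intros H1 H2 H3 Hw Hl Hl2 Hpos Hprod1 Hprod2.
  assert (Hl1 : 0 <= lens r1) by (unfold lens in *; destruct (Rle_dec d a); nra).
  split; [exact Hl1|].
  assert (Hangle1 : arc_angle r <= arc_angle r1) by (apply arc_angle_le; nra).
  assert (Hangle2 : arc_angle r2 <= arc_angle r) by (apply arc_angle_le; nra).
  pose proof (arc_angle_bounds r ltac:(lra) Hl).
  pose proof (arc_angle_bounds r1 H1 Hl1).
  pose proof (arc_angle_bounds r2 ltac:(lra) Hl2).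
  assert (Hmix : r * lens r <= r1 * lens r1 + r * lens r2).
  { unfold lens in *.
    pose proof (shifted_lens_mix a d (r1 - d) (r - d) (r2 - d)) as Hmix.
    replace (r1 - d + d) with r1 in Hmix by ring.
    replace (r - d + d) with r in Hmix by ring.
    apply Hmix; lra. }
  rewrite <- (sin_half_arc_angle r), <- (sin_half_arc_angle r1),
    <- (sin_half_arc_angle r2) in Hmix by lra.
  pose proof (sin_half_arc_angle_nonneg r1 H1 Hl1).
  pose proof (sin_half_arc_angle_nonneg r2 ltac:(lra) Hl2).
  assert (0 < sin (arc_angle r / 2)) by (apply sin_gt_0; lra).
  apply (angle_weight_le_sum_sqrt _ _ _ _ _ _ (sin (arc_angle r / 2))
           (sin (arc_angle r1 / 2)) (sin (arc_angle r2 / 2))); try lra.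
  - apply sin_half_ratio_antitone; lra.
  - apply sin_half_sqr_ratio_monotone; lra.
  - apply Rmult_le_reg_l with (4 * d); [lra|]. nra.
Qed.

Lemma arc_le_when_inner_narrower r1 r r2 :
  a <= r1 -> r1 <= r -> r <= r2 -> r2 - r1 <= a / 2 ->
  0 <= lens r -> 0 <= lens r2 -> 0 < arc_angle r ->
  r * r1 < d ^ 2 - a ^ 2 -> d ^ 2 - a ^ 2 < r * r2 ->
  0 <= lens r1 /\ r * arc_angle r <= r1 * arc_angle r1 + r2 * arc_angle r2.
Proof.
  intros H1 H2 H3 Hw Hl Hl2 Hpos Hprod1 Hprod2.
  destruct (shifted_lens_sum a d (r1 - d) (r - d) (r2 - d) Ha Hd ltac:(lra) ltac:(lra)
              ltac:(lra) ltac:(lra) ltac:(unfold lens in *; lra)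
              ltac:(unfold lens in *; lra) ltac:(nra) ltac:(nra)) as [Hsq1 Hsum].
  assert (Hl1 : 0 <= lens r1) by (unfold lens; lra).
  change (lens r <= lens r1 + lens r2) in Hsum.
  split; [exact Hl1|].
  assert (Hangle1 : arc_angle r1 <= arc_angle r) by (apply arc_angle_le; nra).
  assert (Hangle2 : arc_angle r2 <= arc_angle r) by (apply arc_angle_le; nra).
  pose proof (arc_angle_bounds r ltac:(lra) Hl).
  pose proof (arc_angle_bounds r1 H1 Hl1).
  pose proof (arc_angle_bounds r2 ltac:(lra) Hl2).
  rewrite <- (sin_half_arc_angle r), <- (sin_half_arc_angle r1),
    <- (sin_half_arc_angle r2) in Hsum by lra.
  assert (0 < sin (arc_angle r / 2)) by (apply sin_gt_0; lra).
  apply (angle_weight_le_sum _ _ _ _ _ _ (sin (arc_angle r / 2))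
           (sin (arc_angle r1 / 2)) (sin (arc_angle r2 / 2))); try lra.
  - apply sin_half_sqr_ratio_monotone; lra.
  - apply sin_half_sqr_ratio_monotone; lra.
  - apply Rmult_le_reg_l with (4 * d); [lra|]. nra.
Qed.

Lemma fR_le_two_point r1 r r2 : a <= r1 -> r1 <= r -> r <= r2 -> r2 - r1 <= a / 2 ->
  fR a d r <= fR a d r1 + fR a d r2.
Proof.
  intros H1 H2 H3 Hw. assert (HPI := PI_RGT_0).
  pose proof (fR_nonneg a d r1 Ha ltac:(lra)). pose proof (fR_nonneg a d r2 Ha ltac:(lra)).
  destruct (Rlt_dec (lens r) 0) as [Hout|Hl%Rnot_lt_le].
  { rewrite fR_out_lens; lra. }
  pose proof (arc_angle_bounds r ltac:(lra) Hl).
  rewrite (fR_in_lens r) by lra.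
  assert (HC : 0 < 2 / (PI * a ^ 2)).
  { apply Rdiv_lt_0_compat; [lra|]. apply Rmult_lt_0_compat; [lra | apply pow_lt; lra]. }
  set (C := 2 / (PI * a ^ 2)) in *.
  destruct (Req_dec (arc_angle r) 0) as [->|Hpos]; [lra|].
  assert (Hpos' : 0 < arc_angle r) by lra.
  destruct (Rlt_dec (lens r2) 0) as [Hout2|Hl2%Rnot_lt_le].
  { destruct (arc_le_when_outer_outside r1 r r2) as [Hl1 Harc]; try lra.
    rewrite (fR_in_lens r1) by lra. fold C.
    assert (C * (r * arc_angle r) <= C * (r1 * arc_angle r1)) by (apply Rmult_le_compat_l; lra).
    lra. }
  rewrite (fR_in_lens r2) by lra. fold C.
  pose proof (arc_angle_bounds r2 ltac:(lra) Hl2).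
  destruct (Rle_dec (r * r2) (d ^ 2 - a ^ 2)) as [Hprod2|Hprod2%Rnot_le_lt].
  { assert (arc_angle r <= arc_angle r2) by (apply arc_angle_le; nra).
    assert (C * (r * arc_angle r) <= C * (r2 * arc_angle r2))
      by (apply Rmult_le_compat_l; nra).
    lra. }
  assert (Hsum : 0 <= lens r1 /\ r * arc_angle r <= r1 * arc_angle r1 + r2 * arc_angle r2).
  { destruct (Rle_dec (d ^ 2 - a ^ 2) (r * r1)) as [Hprod1|Hprod1%Rnot_le_lt].
    - apply arc_le_when_inner_wider; lra.
    - apply arc_le_when_inner_narrower; lra. }
  destruct Hsum as [Hl1 Harc].
  rewrite (fR_in_lens r1) by lra. fold C.
  assert (C * (r * arc_angle r) <= C * (r1 * arc_angle r1 + r2 * arc_angle r2))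
    by (apply Rmult_le_compat_l; lra).
  lra.
Qed.

End Arc.

Lemma fR_center_le_two_point a r1 r r2 : 0 < a -> a <= r1 -> r1 <= r -> r <= r2 ->
  fR a 0 r <= fR a 0 r1 + fR a 0 r2.
Proof.
  intros Ha H1 H2 H3.
  pose proof (fR_nonneg a 0 r1 Ha ltac:(lra)). pose proof (fR_nonneg a 0 r2 Ha ltac:(lra)).
  destruct (Req_dec r a) as [->|Hne].
  - replace r1 with a by lra. lra.
  - unfold fR at 1. rewrite Rminus_0_r, Rplus_0_r.
    destruct (Rle_dec r a); [lra|].
    destruct (Rlt_dec a r); lra.
Qed.

Theorem lemma4p9 (Rad : R) (ys : list (R * R)) (r1 r r2 : R) :
  0 < Rad ->
  Rad <= r1 -> r1 <= r -> r <= r2 -> r2 - r1 <= Rad / 2 ->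
  Nprime Rad ys r1 + Nprime Rad ys r2 >= Nprime Rad ys r.
Proof.
  intros Ha H1 H2 H3 Hw.
  induction ys as [|p ys IH]; unfold Nprime in *; simpl; [lra|].
  assert (Hterm : fR Rad (norm2 p) r <= fR Rad (norm2 p) r1 + fR Rad (norm2 p) r2).
  { destruct (Req_dec (norm2 p) 0) as [->|Hp].
    - apply fR_center_le_two_point; lra.
    - apply fR_le_two_point; try lra.
      pose proof (sqrt_pos (fst p ^ 2 + snd p ^ 2)). unfold norm2 in *. lra. }
  lra.
Qed.
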